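(* Let $n\ge0$ be an integer, $N=2^{n+1}$, and consider the 1D-Tree over the uniform dataset $\{0,\dots,N-1\}$ (described in the context). Let $s$ be a real number with $1<s\le N$, $\kappa=\lfloor\log_2(N/s)\rfloor$ (so $2^{n-\kappa}<s\le2^{n-\kappa+1}$), and $Q=[x,x+s)$ with $x\in[0,N-s]$. Then $\mathrm{level}_{\mathrm{Tree}}(Q)\in\{0,\dots,\kappa\}$, and: (i) for $\ell\in\{0,\dots,\kappa-1\}$, $\mathrm{level}_{\mathrm{Tree}}(Q)=\ell$ if $x\in\bigl(m2^{n-\ell}-s,\ m2^{n-\ell}\bigr)$ for some odd $m\in\{1,3,\dots,2^{\ell+1}-1\}$ (that is, if $Q$ straddles a primitive boundary point of level $\ell+1$ but no primitive boundary point of level $\le\ell$); (ii) $\mathrm{level}_{\mathrm{Tree}}(Q)=\kappa$ if $x\in\bigl[m2^{n-\kappa+1},\ (m+1)2^{n-\kappa+1}-s\bigr]$ for some $m\in\{0,1,\dots,2^\kappa-1\}$.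
   Context: The 1D-Tree over $\mathcal{D}=\{0,\dots,N-1\}\subset[0,N)$ has levels $\ell=0,\dots,n+1$; its level-$\ell$ nodes are the $2^\ell$ intervals $[m2^{n-\ell+1},(m+1)2^{n-\ell+1})$, $m=0,\dots,2^\ell-1$; each node's children are its left and right halves. SRC-search returns the deepest node whose interval contains $Q$; $\mathrm{level}_{\mathrm{Tree}}(Q)$ is its level. A primitive boundary point of level $\ell$ is the point splitting a level-$(\ell-1)$ node into its two children, i.e. an odd multiple of $2^{n-\ell+1}$. $Q=[x,x+s)$ straddles a point $p$ if $x<p<x+s$. *)

From Stdlib Require Import Reals Lra Lia Arith ClassicalEpsilon.
Open Scope R_scope.

Definition node_width (n l : nat) : R := 2 ^ (n + 1 - l).

(* The level-l node of index m is the interval [m w, (m+1) w), w = node_width n l. *)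
Definition node_lo (n l m : nat) : R := INR m * node_width n l.
Definition node_hi (n l m : nat) : R := INR (m + 1) * node_width n l.

(* Q = [x, x+s) (s > 0) is contained in node [a, b) iff a <= x and x + s <= b. *)
Definition node_contains (n l m : nat) (x s : R) : Prop :=
  node_lo n l m <= x /\ x + s <= node_hi n l m.

Definition level_contains (n l : nat) (x s : R) : Prop :=
  exists m : nat, (m < 2 ^ l)%nat /\ node_contains n l m x s.

Fixpoint deepest (n : nat) (x s : R) (k : nat) : nat :=
  match k with
  | O => O
  | S k' =>
      if excluded_middle_informative (level_contains n k x s) then k
      else deepest n x s k'
  end.

(* level_Tree(Q): the level of the deepest node whose interval contains Q
   (the node returned by SRC-search), over levels 0..n+1. *)
Definition levelTree (n : nat) (x s : R) : nat := deepest n x s (n + 1).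

Definition log2R (y : R) : R := ln y / ln 2.

(* The level kappa is characterised by 2^(n-kappa) < s <= 2^(n-kappa+1): nodes of
   level kappa are wide enough to hold Q, nodes of any deeper level are too narrow.
   An odd multiple p of 2^(n-l) is a boundary point of every level deeper than l,
   so a query straddling p lies in no such node; as l < kappa gives s <= 2^(n-l), it
   does lie in the level-l node whose midpoint is p. *)

From Stdlib Require Import Reals Lra Lia ClassicalEpsilon.
Open Scope R_scope.

Section Deepest.

Variables (n : nat) (x s : R).

Lemma deepest_le_of_not_contains (top K : nat) :
  (forall k, (K < k <= top)%nat -> ~ level_contains n k x s) ->
  (deepest n x s top <= K)%nat.
Proof.
  induction top as [|top IH]; intros Hdeeper; simpl; [lia|].
  destruct excluded_middle_informative as [Hc|Hc].
  - destruct (Nat.le_gt_cases (S top) K); [lia|].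
    exfalso; apply (Hdeeper (S top)); auto; lia.
  - apply IH; intros k Hk; apply Hdeeper; lia.
Qed.

Lemma le_deepest_of_contains (top K : nat) : (K <= top)%nat ->
  level_contains n K x s -> (K <= deepest n x s top)%nat.
Proof.
  induction top as [|top IH]; intros HK Hc; simpl; [lia|].
  destruct excluded_middle_informative as [Htop|Htop]; [lia|].
  destruct (Nat.eq_dec K (S top)) as [->|]; [contradiction|].
  apply IH; [lia|exact Hc].
Qed.

Lemma deepest_eq_of_contains (top K : nat) : (K <= top)%nat ->
  level_contains n K x s ->
  (forall k, (K < k <= top)%nat -> ~ level_contains n k x s) ->
  deepest n x s top = K.
Proof.
  intros HK Hc Hdeeper.
  apply Nat.le_antisymm.
  - exact (deepest_le_of_not_contains top K Hdeeper).
  - exact (le_deepest_of_contains top K HK Hc).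
Qed.

End Deepest.

Lemma level_contains_width (n l : nat) (x s : R) :
  level_contains n l x s -> s <= node_width n l.
Proof.
  intros [m [_ [Hlo Hhi]]]. unfold node_lo, node_hi in *.
  rewrite plus_INR in Hhi. simpl in Hhi. lra.
Qed.

Lemma not_level_contains_straddle (n l j : nat) (x s : R) :
  x < INR j * node_width n l < x + s -> ~ level_contains n l x s.
Proof.
  intros Hp [k [_ [Hlo Hhi]]]. unfold node_lo, node_hi in *.
  assert (Hw : 0 < node_width n l) by (apply pow_lt; lra).
  assert (Hkj : (k < j)%nat).
  { apply INR_lt, Rmult_lt_reg_r with (node_width n l); lra. }
  assert (INR (k + 1) * node_width n l <= INR j * node_width n l).
  { apply Rmult_le_compat_r; [lra|]. apply le_INR; lia. }
  lra.
Qed.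

Lemma boundary_multiple_node_width (n l L m : nat) : (l < L <= n + 1)%nat ->
  INR m * 2 ^ (n - l) = INR (m * 2 ^ (L - l - 1)) * node_width n L.
Proof.
  intros HL. unfold node_width.
  rewrite mult_INR, pow_INR, Rmult_assoc, <- pow_add. simpl INR.
  replace (L - l - 1 + (n + 1 - L))%nat with (n - l)%nat by lia. reflexivity.
Qed.

Lemma not_level_contains_deeper (n kappa k : nat) (x s : R) :
  2 ^ (n - kappa) < s -> (kappa < k)%nat -> ~ level_contains n k x s.
Proof.
  intros Hs Hk Hc. apply level_contains_width in Hc. unfold node_width in Hc.
  assert (2 ^ (n + 1 - k) <= 2 ^ (n - kappa)) by (apply Rle_pow; lra || lia).
  lra.
Qed.

Lemma level_contains_odd_boundary (n l m : nat) (x s : R) : (l <= n)%nat ->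
  Nat.odd m = true -> (m < 2 ^ (l + 1))%nat -> s <= 2 ^ (n - l) ->
  INR m * 2 ^ (n - l) - s < x < INR m * 2 ^ (n - l) ->
  level_contains n l x s.
Proof.
  intros Hl Hm Hml Hs Hx.
  apply Nat.odd_spec in Hm as [j ->].
  exists j. split.
  { rewrite Nat.pow_add_r in Hml. simpl in Hml. lia. }
  unfold node_contains, node_lo, node_hi, node_width.
  replace (n + 1 - l)%nat with (S (n - l)) by lia. simpl.
  rewrite plus_INR, mult_INR in Hx. rewrite plus_INR. simpl INR in *.
  pose proof (pow_lt 2 (n - l)). nra.
Qed.

Lemma log2R_floor_pow2 (y : R) (k : nat) :
  0 < y -> INR k <= log2R y < INR k + 1 -> 2 ^ k <= y < 2 ^ (k + 1).
Proof.
  intros Hy Hk. unfold log2R in Hk.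
  assert (Hln2 : 0 < ln 2) by (rewrite <- ln_1; apply ln_increasing; lra).
  assert (Hlny : ln y = ln y / ln 2 * ln 2) by (field; lra).
  split.
  - apply Rnot_lt_le; intros Hlt.
    apply ln_increasing in Hlt; [|exact Hy]. rewrite ln_pow in Hlt by lra. nra.
  - apply ln_lt_inv; [exact Hy | apply pow_lt; lra |].
    rewrite ln_pow, plus_INR by lra. simpl INR. nra.
Qed.

Lemma floor_log2_ratio_bounds (n kappa : nat) (s : R) : 1 < s ->
  INR kappa <= log2R (2 ^ (n + 1) / s) < INR kappa + 1 ->
  (kappa <= n)%nat /\ 2 ^ (n - kappa) < s <= 2 ^ (n + 1 - kappa).
Proof.
  intros Hs Hk.
  assert (HN : 0 < 2 ^ (n + 1)) by (apply pow_lt; lra).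
  apply log2R_floor_pow2 in Hk as [Hlo Hhi]; [|apply Rdiv_lt_0_compat; lra].
  apply (Rmult_le_compat_r s) in Hlo; [|lra].
  apply (Rmult_lt_compat_r s) in Hhi; [|lra].
  replace (2 ^ (n + 1) / s * s) with (2 ^ (n + 1)) in Hlo, Hhi by (field; lra).
  assert (Hkn : (kappa <= n)%nat).
  { destruct (Nat.le_gt_cases kappa n) as [|Hgt]; [assumption|].
    assert (2 ^ (n + 1) <= 2 ^ kappa) by (apply Rle_pow; lra || lia). nra. }
  split; [exact Hkn|].
  rewrite <- (Nat.sub_add kappa (n + 1)), pow_add in Hlo by lia.
  rewrite <- (Nat.sub_add (kappa + 1) (n + 1)), pow_add in Hhi by lia.
  replace (n + 1 - (kappa + 1))%nat with (n - kappa)%nat in Hhi by lia.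
  pose proof (pow_lt 2 kappa). pose proof (pow_lt 2 (kappa + 1)).
  split; nra.
Qed.

Theorem lemma3 (n : nat) (s x : R) (kappa : nat) :
  1 < s <= 2 ^ (n + 1) ->
  (* kappa = floor (log2 (N / s)), N = 2^(n+1) *)
  INR kappa <= log2R (2 ^ (n + 1) / s) < INR kappa + 1 ->
  0 <= x <= 2 ^ (n + 1) - s ->
  (levelTree n x s <= kappa)%nat /\
  (forall l m : nat, (l < kappa)%nat -> Nat.odd m = true -> (m < 2 ^ (l + 1))%nat ->
     INR m * 2 ^ (n - l) - s < x < INR m * 2 ^ (n - l) ->
     levelTree n x s = l) /\
  (forall m : nat, (m < 2 ^ kappa)%nat ->
     INR m * 2 ^ (n - kappa + 1) <= x <= INR (m + 1) * 2 ^ (n - kappa + 1) - s ->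
     levelTree n x s = kappa).
Proof.
  (* The range of x is not needed: the node indices m are bounded explicitly. *)
  intros Hs Hk _.
  destruct (floor_log2_ratio_bounds n kappa s) as [Hkn [Hs_lo Hs_hi]]; [lra|exact Hk|].
  assert (Hdeeper : forall k, (kappa < k)%nat -> ~ level_contains n k x s)
    by (intros k; exact (not_level_contains_deeper n kappa k x s Hs_lo)).
  unfold levelTree. split; [|split].
  - apply deepest_le_of_not_contains. intros k Hk'; apply Hdeeper; lia.
  - intros l m Hl Hm Hml Hx. apply deepest_eq_of_contains; [lia| |].
    + apply level_contains_odd_boundary with m; [lia|exact Hm|exact Hml| |exact Hx].
      assert (2 ^ (n + 1 - kappa) <= 2 ^ (n - l)) by (apply Rle_pow; lra || lia). lra.
    + intros k Hk'. apply (not_level_contains_straddle n k (m * 2 ^ (k - l - 1))).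
      rewrite <- boundary_multiple_node_width by lia. lra.
  - intros m Hm Hx. apply deepest_eq_of_contains; [lia| |intros k Hk'; apply Hdeeper; lia].
    exists m. split; [exact Hm|]. unfold node_contains, node_lo, node_hi, node_width.
    replace (n + 1 - kappa)%nat with (n - kappa + 1)%nat by lia. lra.
Qed.
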